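(* Let $\Gamma$ be a finite simplicial graph with property (B2): for all $v,w\in V(\Gamma)$ with $v\le w$ there exists $u\in V(\Gamma)$, $u\ne v,w$, with $v\le u\le w$. Let $v,w\in V(\Gamma)$ be distinct with $v\le w$, and let $t_{vw}$ be the corresponding transvection. Then for every integer $m\ge 0$, $t_{vw}^{m^2}\in\mathrm{S}\mathcal{I}A'_\Gamma(m)$.
   Context: $n=|V(\Gamma)|$. For $v\in V(\Gamma)$, $\mathrm{lk}(v)$ is the set of vertices adjacent to $v$ and $\mathrm{st}(v)=\mathrm{lk}(v)\cup\{v\}$; $v\le w$ iff $\mathrm{lk}(v)\subset\mathrm{st}(w)$. $A_\Gamma=\langle V(\Gamma)\mid [u,v]=1 \text{ whenever } u,v \text{ adjacent}\rangle$. Transvection: for distinct $v,w$ with $v\le w$, $t_{vw}$ maps $v\mapsto vw$, fixing other vertices; partial conjugation $c_{v,Y}$ ($Y$ a connected component of $\Gamma-\mathrm{st}(v)$) maps $x\mapsto v^{-1}xv$ for $x\in Y$, fixing others. $\mathrm{SAut}^0(A_\Gamma)$ is generated by transvections and partial conjugations; $\mathrm{S}\mathcal{I}A_\Gamma(m)$ is the kernel of $\mathrm{SAut}^0(A_\Gamma)\to\mathrm{SL}(n,\mathbb{Z})\to\mathrm{SL}(n,\mathbb{Z}/m\mathbb{Z})$ (action on $H_1(A_\Gamma;\mathbb Z)=\mathbb Z^n$, then reduction mod $m$), and $\mathrm{S}\mathcal{I}A'_\Gamma(m)$ denotes its commutator subgroup. *)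

From mathcomp Require Import all_boot all_order all_algebra.
Set Implicit Arguments. Unset Strict Implicit. Unset Printing Implicit Defensive.
Import GRing.Theory Num.Theory.

(* A finite simplicial graph: vertex type V : finType, adjacency adj : rel V
   (assumed symmetric and irreflexive in the theorem). *)
Section RAAG.
Variables (V : finType) (adj : rel V).

Definition lk (v : V) : {set V} := [set u | adj v u].
Definition st (v : V) : {set V} := v |: lk v.
Definition vle (v w : V) : bool := lk v \subset st w.

Definition B2 : Prop :=
  forall v w : V, v != w -> vle v w ->
    exists u : V, [/\ u != v, u != w, vle v u & vle u w].

Definition adj_off (v : V) : rel V :=
  fun a b => [&& adj a b, a \notin st v & b \notin st v].
Definition is_component (v : V) (Y : {set V}) : Prop :=
  exists2 x : V, x \notin st v & Y = [set y | connect (adj_off v) x y].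

(* Elements of A_Gamma are represented by words: a letter (x, b) is x if
   b = false and x^-1 if b = true. *)
Definition letter := (V * bool)%type.
Definition word := seq letter.
Definition linv (l : letter) : letter := (l.1, ~~ l.2).
Definition winv (u : word) : word := rev (map linv u).

(* The equality of A_Gamma = < V | [u,v] = 1 for adjacent u,v > *)
Inductive raag_eq : word -> word -> Prop :=
| re_refl u : raag_eq u u
| re_sym u u' : raag_eq u u' -> raag_eq u' u
| re_trans u u' u'' : raag_eq u u' -> raag_eq u' u'' -> raag_eq u u''
| re_cat u u' w w' : raag_eq u u' -> raag_eq w w' -> raag_eq (u ++ w) (u' ++ w')
| re_free x b : raag_eq [:: (x, b); (x, ~~ b)] [::]
| re_comm x y b c : adj x y -> raag_eq [:: (x, b); (y, c)] [:: (y, c); (x, b)].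

(* An endomorphism of A_Gamma is given by the images of the generators. *)
Definition gmap := V -> word.
Definition subst (f : gmap) (u : word) : word :=
  flatten (map (fun l : letter => if l.2 then winv (f l.1) else f l.1) u).
Definition gid : gmap := fun x => [:: (x, false)].
Definition aut_eq (f g : gmap) : Prop := forall x, raag_eq (f x) (g x).

Inductive gen :=
| Tr of V & V
| PC of V & {set V}.

Definition gen_valid (s : gen) : Prop :=
  match s with
  | Tr v w => v != w /\ vle v w
  | PC v Y => is_component v Y
  end.

(* the generator (b = false) or its inverse (b = true) as a map on generators *)
Definition gen_map (s : gen) (b : bool) : gmap :=
  match s with
  | Tr v w => fun x => if x == v then [:: (v, false); (w, b)] else [:: (x, false)]
  | PC v Y => fun x => if x \in Y then [:: (v, ~~ b); (x, false); (v, b)]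
                       else [:: (x, false)]
  end.

(* formal words in the generators and their inverses: elements of SAut^0 *)
Definition fword := seq (gen * bool).
End RAAG.

Section RAAG2.
Variables (V : finType) (adj : rel V).

Fixpoint fvalid (s : fword V) : Prop :=
  match s with [::] => True | p :: r => gen_valid adj p.1 /\ fvalid r end.

(* evaluation: [s1; ...; sk] |-> s1 o s2 o ... o sk *)
Fixpoint feval (s : fword V) : gmap V :=
  match s with
  | [::] => @gid V
  | p :: r => fun x => subst (gen_map p.1 p.2) (feval r x)
  end.

Definition finv (s : fword V) : fword V := rev (map (fun p => (p.1, ~~ p.2)) s).
Definition fcomm (a b : fword V) : fword V := finv a ++ finv b ++ a ++ b.

(* exponent sum of generator y in a word: the action on H_1 = Z^n *)
Definition expsum (y : V) (u : word V) : int :=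
  \sum_(l <- u | l.1 == y) (if l.2 then (-1)%R else 1%R).

(* S IA_Gamma(m): elements of SAut^0 acting trivially on H_1(A_Gamma; Z/mZ) *)
Definition in_SIA (m : nat) (s : fword V) : Prop :=
  fvalid s /\
  forall x y : V, (expsum y (feval s x) = (x == y)%:Z %[mod m%:Z])%Z.

(* S IA'_Gamma(m): commutator subgroup of S IA_Gamma(m), i.e. the set of
   products of commutators of elements of S IA_Gamma(m). *)
Definition in_SIA' (m : nat) (s : fword V) : Prop :=
  exists cs : seq (fword V * fword V),
    foldr (fun c P => (in_SIA m c.1 /\ in_SIA m c.2) /\ P) True cs /\
    aut_eq adj (feval s) (feval (flatten (map (fun c => fcomm c.1 c.2) cs))).

End RAAG2.

From Pilot Require Import Defs.
From mathcomp Require Import all_boot all_order all_algebra.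
From mathcomp Require Import ring.
(* Re-imported so that [finv] refers to Defs.finv, not to fingraph's [finv]. *)
Import Pilot.Defs.
Set Implicit Arguments. Unset Strict Implicit. Unset Printing Implicit Defensive.
Import GRing.Theory.

(* By (B2) pick u with v <= u <= w. The transvection powers t_vu^m and t_uw^-m
   lie in SIA(m); their commutator K fixes every generator but u and v, sends
   u to u w^m w^-m and v to v u^-m (u w^m)^m. If u and w commute, K is thus
   t_vw^(m^2). Otherwise the component Y of Gamma - st(u) containing w avoids
   v, and the partial conjugation c = c_{u,Y}^-1, which acts trivially on
   homology, satisfies (c t_vw^m)^m = c^m K. As (c x)^k = c^k x^k modulo the
   commutator subgroup of SIA(m), t_vw^(m^2) = (t_vw^m)^m lies in SIA'(m). *)

Definition ncat (T : Type) k (s : seq T) : seq T := flatten (nseq k s).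

Lemma ncatS (T : Type) k (s : seq T) : ncat k.+1 s = s ++ ncat k s.
Proof. by []. Qed.

Lemma ncatSr (T : Type) k (s : seq T) : ncat k.+1 s = ncat k s ++ s.
Proof. by rewrite /ncat -addn1 nseqD flatten_cat /= cats0. Qed.

Lemma nseqSr (T : Type) k (x : T) : nseq k.+1 x = nseq k x ++ [:: x].
Proof. by rewrite -addn1 nseqD. Qed.

Lemma ncat_nseq (T : Type) k j (a : T) : ncat k (nseq j a) = nseq (k * j) a.
Proof. by elim: k => [|k IH] //; rewrite mulSn nseqD -IH. Qed.

Section RightAngledArtinGroups.
Variables (V : finType) (adj : rel V).
Hypotheses (adj_sym : symmetric adj) (adj_irr : irreflexive adj).
Local Notation req := (raag_eq adj).

Lemma req_catl u w w' : req w w' -> req (u ++ w) (u ++ w').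
Proof. by move=> h; apply: re_cat => //; apply: re_refl. Qed.

Lemma req_catr u u' w : req u u' -> req (u ++ w) (u' ++ w).
Proof. by move=> h; apply: re_cat => //; apply: re_refl. Qed.

Lemma req_cons l w w' : req w w' -> req (l :: w) (l :: w').
Proof. exact: (req_catl [:: l]). Qed.

Lemma req_ncat k p p' : req p p' -> req (ncat k p) (ncat k p').
Proof. by move=> h; elim: k => [|k IH]; [apply: re_refl | apply: re_cat]. Qed.

Lemma linvK : involutive (@linv V).
Proof. by case=> x b; rewrite /linv /= negbK. Qed.

Lemma winv_cat (u w : word V) : winv (u ++ w) = winv w ++ winv u.
Proof. by rewrite /winv map_cat rev_cat. Qed.

Lemma winv_cons l (u : word V) : winv (l :: u) = winv u ++ [:: linv l].
Proof. by rewrite /winv /= rev_cons -cats1. Qed.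

Lemma winvK : involutive (@winv V).
Proof. by move=> u; rewrite /winv map_rev revK -map_comp (eq_map linvK) map_id. Qed.

Lemma winv_nseq (x : V) b k : winv (nseq k (x, b)) = nseq k (x, ~~ b).
Proof. by rewrite /winv map_nseq rev_nseq. Qed.

Lemma req_invr u : req (u ++ winv u) [::].
Proof.
elim: u => [|[x b] u IH] /=; first exact: re_refl.
rewrite winv_cons catA.
apply: (re_trans (u' := [:: (x, b)] ++ [::] ++ [:: linv (x, b)])); last exact: re_free.
by apply: (req_catl [:: (x, b)]); apply: req_catr.
Qed.

Lemma req_invl u : req (winv u ++ u) [::].
Proof. by have := req_invr (winv u); rewrite winvK. Qed.

Lemma req_cancelr u p w : req (u ++ p ++ winv p ++ w) (u ++ w).
Proof. by apply: req_catl; rewrite catA; apply: (req_catr _ (req_invr p)). Qed.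

Lemma req_cancell u p w : req (u ++ winv p ++ p ++ w) (u ++ w).
Proof. by have := req_cancelr u (winv p) w; rewrite winvK. Qed.

Lemma req_winv u w : req u w -> req (winv u) (winv w).
Proof.
elim=> {u w} [u|u u' _ IH|u u' u'' _ IH1 _ IH2|u u' w w' _ IH1 _ IH2|x b|x y b c hxy].
- exact: re_refl.
- exact: re_sym.
- exact: re_trans IH1 IH2.
- by rewrite !winv_cat; apply: re_cat.
- by rewrite /winv /= /linv /= negbK; apply: re_free.
- by rewrite /winv /= /linv /=; apply: re_comm; rewrite adj_sym.
Qed.

Lemma req_ncat_conj k c q :
  req (ncat k (c ++ q ++ winv c)) (c ++ ncat k q ++ winv c).
Proof.
elim: k => [|k IH]; first exact/re_sym/req_invr.
rewrite ncatS; apply: re_trans (req_catl _ IH) _.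
by have := req_cancell (c ++ q) c (ncat k q ++ winv c); rewrite -!catA.
Qed.

Definition wcomm (p q : word V) := req (p ++ q) (q ++ p).

Lemma wcomm_sym p q : wcomm p q -> wcomm q p.
Proof. exact: re_sym. Qed.

Lemma wcomm_catl p p' q : wcomm p q -> wcomm p' q -> wcomm (p ++ p') q.
Proof.
move=> h h'; rewrite /wcomm -catA.
by apply: re_trans (req_catl p h') _; rewrite !catA; apply: req_catr.
Qed.

Lemma wcomm_catr p q q' : wcomm p q -> wcomm p q' -> wcomm p (q ++ q').
Proof. by move=> h h'; apply/wcomm_sym/wcomm_catl; apply: wcomm_sym. Qed.

Lemma wcomm_ncatr p k q : wcomm p q -> wcomm p (ncat k q).
Proof.
move=> h; elim: k => [|k IH] /=; last exact: wcomm_catr.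
by rewrite /wcomm cats0; apply: re_refl.
Qed.

Lemma wcomm_nseqr p x b k : wcomm p [:: (x, b)] -> wcomm p (nseq k (x, b)).
Proof. by move=> h; rewrite -[k]muln1 -ncat_nseq; apply: wcomm_ncatr. Qed.

Lemma wcomm_winvl p q : wcomm p q -> wcomm (winv p) q.
Proof.
move=> h; apply: (re_trans (u' := winv p ++ q ++ p ++ winv p)).
  by apply: re_sym; have := req_cancelr (winv p ++ q) p [::]; rewrite !cats0 -!catA.
apply: (re_trans (u' := winv p ++ p ++ q ++ winv p)); last exact: req_cancell [::] _ _.
by rewrite [q ++ _]catA [p ++ (q ++ _)]catA; apply/req_catl/req_catr/re_sym.
Qed.

Lemma wcomm_winvr p q : wcomm p q -> wcomm p (winv q).
Proof. by move=> h; apply/wcomm_sym/wcomm_winvl/wcomm_sym. Qed.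

Lemma wcomm_conj c p q : wcomm p q -> wcomm (c ++ p ++ winv c) (c ++ q ++ winv c).
Proof.
move=> h; apply: (re_trans (u' := c ++ (p ++ q) ++ winv c)).
  by have := req_cancell (c ++ p) c (q ++ winv c); rewrite -!catA.
apply: (re_trans (u' := c ++ (q ++ p) ++ winv c)); first by apply: req_catl; apply: req_catr.
by apply: re_sym; have := req_cancell (c ++ q) c (p ++ winv c); rewrite -!catA.
Qed.

Lemma req_ncat_cat k p q : wcomm q p -> req (ncat k (p ++ q)) (ncat k p ++ ncat k q).
Proof.
move=> h; elim: k => [|k IH]; first exact: re_refl.
rewrite !ncatS -!catA; apply: req_catl; apply: re_trans (req_catl q IH) _.
by rewrite !catA; apply: req_catr; apply: wcomm_ncatr.
Qed.
Lemma in_st u y : (y \in st adj u) = (y == u) || adj u y.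
Proof. by rewrite !inE. Qed.

Lemma wcomm_letters x y b c : y \in st adj x -> wcomm [:: (x, b)] [:: (y, c)].
Proof.
rewrite in_st => /orP [/eqP ->|hxy]; last exact: re_comm.
case: (eqVneq b c) => [<-|]; first exact: re_refl.
by case: b; case: c => // _; apply: re_trans (re_sym (re_free _ _ _)); apply: re_free.
Qed.

Definition subst_letter (f : gmap V) (l : letter V) : word V :=
  if l.2 then winv (f l.1) else f l.1.

Lemma subst_cons (f : gmap V) l u : subst f (l :: u) = subst_letter f l ++ subst f u.
Proof. by []. Qed.

Lemma subst_cat (f : gmap V) u w : subst f (u ++ w) = subst f u ++ subst f w.
Proof. by rewrite /subst map_cat flatten_cat. Qed.

Lemma subst1 (f : gmap V) x : subst f [:: (x, false)] = f x.
Proof. by rewrite subst_cons cats0. Qed.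

Lemma subst_ncat (f : gmap V) k p : subst f (ncat k p) = ncat k (subst f p).
Proof. by elim: k => [|k IH] //; rewrite !ncatS subst_cat IH. Qed.

Lemma subst_nseq (f : gmap V) x b k :
  subst f (nseq k (x, b)) = ncat k (subst_letter f (x, b)).
Proof. by elim: k => [|k IH] //; rewrite subst_cons IH. Qed.

Lemma subst_winv (f : gmap V) u : subst f (winv u) = winv (subst f u).
Proof.
elim: u => [|[x b] u IH] //.
rewrite winv_cons subst_cat IH subst_cons winv_cat /subst /= cats0.
by case: b; rewrite /subst_letter /= ?winvK.
Qed.

Lemma subst_comp (f g : gmap V) u :
  subst f (subst g u) = subst (fun x => subst f (g x)) u.
Proof.
elim: u => [|[x b] u IH] //.
by rewrite !subst_cons subst_cat IH /subst_letter; case: b => //=; rewrite subst_winv.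
Qed.

Lemma subst_gid (u : word V) : subst (@gid V) u = u.
Proof. by elim: u => [|[x b] u IH] //; rewrite subst_cons IH; case: b. Qed.

Lemma subst_id_on (f : gmap V) (p : word V) :
  all (fun l : letter V => f l.1 == [:: (l.1, false)]) p -> subst f p = p.
Proof.
elim: p => [|[x b] p IH] //= /andP [/eqP fx hp].
by rewrite subst_cons IH // /subst_letter /= fx; case: b.
Qed.

Lemma subst_req_fun (f g : gmap V) u :
  (forall x, req (f x) (g x)) -> req (subst f u) (subst g u).
Proof.
move=> h; elim: u => [|[x b] u IH]; first exact: re_refl.
rewrite !subst_cons; apply: re_cat => //; rewrite /subst_letter /=.
by case: b; [apply: req_winv | apply: h].
Qed.

Definition hom (f : gmap V) := forall x y, adj x y -> wcomm (f x) (f y).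

Lemma subst_req (f : gmap V) u w : hom f -> req u w -> req (subst f u) (subst f w).
Proof.
move=> hf; elim=> {u w} [u|u u' _ IH|u u' u'' _ IH1 _ IH2|u u' w w' _ IH1 _ IH2|x b|x y b c hxy].
- exact: re_refl.
- exact: re_sym.
- exact: re_trans IH1 IH2.
- by rewrite !subst_cat; apply: re_cat.
- by rewrite /subst /subst_letter /= cats0; case: b; [apply: req_invl | apply: req_invr].
- have h := hf _ _ hxy; rewrite /subst /subst_letter /= !cats0.
  case: b; case: c => //=.
  + exact/wcomm_winvl/wcomm_winvr.
  + exact: wcomm_winvl.
  + exact: wcomm_winvr.
Qed.

Lemma hom_comp (f g : gmap V) : hom f -> hom g -> hom (fun x => subst f (g x)).
Proof. by move=> hf hg x y hxy; rewrite /wcomm -!subst_cat; apply/subst_req/hg. Qed.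

Lemma component_notin_st u (Y : {set V}) y :
  is_component adj u Y -> y \in Y -> y \notin st adj u.
Proof.
case=> x0 hx0 -> {Y}; rewrite inE => /connectP [p hp ->] {y}.
elim: p x0 hx0 hp => [|z p IH] x0 hx0 //= /andP [/and3P [_ _ hz] hp].
exact: IH hp.
Qed.

Lemma component_notin_self u (Y : {set V}) : is_component adj u Y -> u \notin Y.
Proof. by move=> hY; apply: contraTN (component_notin_st hY) _; rewrite in_st eqxx. Qed.

Lemma component_adj u (Y : {set V}) y z : is_component adj u Y -> y \in Y ->
  adj y z -> z \notin st adj u -> z \in Y.
Proof.
move=> hY hy hyz hz; have hy' := component_notin_st hY hy.
case: hY hy => x0 _ ->; rewrite !inE => hy.
by apply: connect_trans hy (connect1 _); rewrite /adj_off hyz hy' hz.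
Qed.

Lemma vle_notin_component u v x : vle adj v u -> v != x ->
  v \notin [set y | connect (adj_off adj u) x y].
Proof.
move=> hle hvx; rewrite inE; apply/negP => /connectP [p hp hv].
case/lastP: p hp hv => [|p z]; first by move=> _ /= hxv; rewrite hxv eqxx in hvx.
rewrite last_rcons rcons_path => /andP [_ /and3P [hz hlast _]] hzv.
have := subsetP hle (last x p); rewrite inE hzv adj_sym => /(_ hz).
by rewrite (negbTE hlast).
Qed.

Lemma hom_Tr v w b : v != w -> vle adj v w -> hom (gen_map (Tr v w) b).
Proof.
move=> hvw hle x y hxy.
have lk_v z : adj v z -> z \in st adj w by move=> hz; apply: (subsetP hle); rewrite inE.
rewrite /gen_map -[[:: (v, false); _]]/([:: (v, false)] ++ [:: (w, b)]).
case: (eqVneq x v) => [ex|nx]; case: (eqVneq y v) => [ey|ny].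
- by move: hxy; rewrite ex ey adj_irr.
- rewrite ex in hxy; apply: wcomm_catl; last exact: wcomm_letters (lk_v _ hxy).
  by apply: wcomm_letters; rewrite in_st hxy orbT.
- rewrite ey adj_sym in hxy; apply: wcomm_catr.
    by apply/wcomm_sym/wcomm_letters; rewrite in_st hxy orbT.
  exact/wcomm_sym/wcomm_letters/lk_v.
- exact: re_comm.
Qed.

Lemma hom_PC u (Y : {set V}) b : is_component adj u Y -> hom (gen_map (PC u Y) b).
Proof.
move=> hY x y hxy; rewrite /gen_map.
have conj_u z : [:: (u, ~~ b); (z, false); (u, b)] =
    [:: (u, ~~ b)] ++ [:: (z, false)] ++ winv [:: (u, ~~ b)].
  by rewrite /winv /= /linv /= negbK.
have out z t : z \in Y -> t \notin Y -> adj z t ->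
    wcomm [:: (u, ~~ b); (z, false); (u, b)] [:: (t, false)].
  move=> hz ht hzt; have hut : t \in st adj u.
    by apply: contraNT ht; exact: component_adj hY hz hzt.
  rewrite -[[:: _; _; _]]/([:: (u, ~~ b)] ++ [:: (z, false)] ++ [:: (u, b)]).
  apply: wcomm_catl; first exact: wcomm_letters.
  apply: wcomm_catl; last exact: wcomm_letters.
  by apply: wcomm_letters; rewrite in_st hzt orbT.
case: ifP => hx; case: ifP => hy.
- by rewrite !conj_u; apply/wcomm_conj/re_comm.
- by apply: out; rewrite ?hy.
- by apply/wcomm_sym/out; rewrite ?hx // adj_sym.
- exact: re_comm.
Qed.

Lemma hom_gen (g : gen V) b : gen_valid adj g -> hom (gen_map g b).
Proof. by case: g => [v w [hvw hle]|u Y hY]; [apply: hom_Tr | apply: hom_PC]. Qed.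

Lemma fvalid_cat (s t : fword V) : fvalid adj s -> fvalid adj t -> fvalid adj (s ++ t).
Proof. by elim: s => [|p s IH] //= [hp hs] ht; split; last exact: IH. Qed.

Lemma fvalid_ncat k (s : fword V) : fvalid adj s -> fvalid adj (ncat k s).
Proof. by move=> hs; elim: k => [|k IH] //; apply: fvalid_cat. Qed.

Lemma fvalid_nseq k (p : gen V * bool) : gen_valid adj p.1 -> fvalid adj (nseq k p).
Proof. by move=> hp; elim: k. Qed.

Lemma finv_cat (s t : fword V) : finv (s ++ t) = finv t ++ finv s.
Proof. by rewrite /finv map_cat rev_cat. Qed.

Lemma finvK : involutive (@finv V).
Proof.
move=> s; rewrite /finv map_rev revK -map_comp -[RHS]map_id.
by apply: eq_map => -[p b] /=; rewrite negbK.
Qed.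

Lemma finv_nseq (g : gen V) b k : finv (nseq k (g, b)) = nseq k (g, ~~ b).
Proof. by rewrite /finv map_nseq rev_nseq. Qed.

Lemma fvalid_finv (s : fword V) : fvalid adj s -> fvalid adj (finv s).
Proof.
elim: s => [|p s IH] //= [hp hs].
by rewrite -cat1s finv_cat; apply: fvalid_cat; [apply: IH | ].
Qed.

Lemma feval_cat (s t : fword V) x : feval (s ++ t) x = subst (feval s) (feval t x).
Proof.
elim: s x => [|p s IH] x /=; first by rewrite subst_gid.
by rewrite IH subst_comp.
Qed.

Lemma feval1 (p : gen V * bool) x : feval [:: p] x = gen_map p.1 p.2 x.
Proof. exact: subst1. Qed.

Lemma hom_feval (s : fword V) : fvalid adj s -> hom (feval s).
Proof.
elim: s => [_ x y hxy|p s IH [hp hs]]; first exact: re_comm.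
by apply: hom_comp; [apply: hom_gen | apply: IH].
Qed.

Definition fequiv (s t : fword V) := forall x, req (feval s x) (feval t x).

Lemma fequiv_refl s : fequiv s s. Proof. by move=> x; apply: re_refl. Qed.
Lemma fequiv_sym s t : fequiv s t -> fequiv t s. Proof. by move=> h x; apply: re_sym. Qed.
Lemma fequiv_trans s t r : fequiv s t -> fequiv t r -> fequiv s r.
Proof. by move=> h1 h2 x; apply: re_trans (h2 x). Qed.

Lemma fequiv_catl r s t : fvalid adj r -> fequiv s t -> fequiv (r ++ s) (r ++ t).
Proof. by move=> hr h x; rewrite !feval_cat; apply/subst_req/h/hom_feval. Qed.

Lemma fequiv_catr r s t : fequiv s t -> fequiv (s ++ r) (t ++ r).
Proof. by move=> h x; rewrite !feval_cat; apply: subst_req_fun. Qed.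

Lemma gen_mapK (g : gen V) b x : gen_valid adj g ->
  req (subst (gen_map g b) (gen_map g (~~ b) x)) [:: (x, false)].
Proof.
case: g => [v w [hvw _]|u Y hY] /=.
  case: (eqVneq x v) => [->|hxv]; last by rewrite subst1 (negbTE hxv); apply: re_refl.
  rewrite /subst /subst_letter /= eqxx eq_sym (negbTE hvw) cats0.
  by case: b => /=; exact: req_cons _ (re_free _ w _).
have huY := component_notin_self hY.
case: ifP => hx; last by rewrite subst1 hx; apply: re_refl.
have letter_u c : (if c then winv [:: (u, false)] else [:: (u, false)]) = [:: (u, c)].
  by case: c.
rewrite negbK /subst /subst_letter /= hx (negbTE huY) !letter_u /=.
exact: re_cat (re_free _ u b) (req_cons (x, false) (re_free _ u b)).
Qed.

Lemma fequiv_finvl (s : fword V) : fvalid adj s -> fequiv (finv s ++ s) [::].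
Proof.
elim: s => [|[g b] s IH] /=; first by move=> _; apply: fequiv_refl.
case=> hg hs; rewrite -cat1s finv_cat -catA.
apply: fequiv_trans (IH hs); apply: fequiv_catl; first exact: fvalid_finv.
rewrite catA -[s in fequiv _ s]cat0s; apply: fequiv_catr => x.
rewrite [feval _ x]/= subst1.
by have := gen_mapK (~~ b) x hg; rewrite negbK.
Qed.

Lemma fequiv_cancell r g t : fvalid adj r -> fvalid adj g ->
  fequiv (r ++ finv g ++ g ++ t) (r ++ t).
Proof.
move=> hr hg; apply: fequiv_catl => //; rewrite catA -[t in fequiv _ t]cat0s.
exact/fequiv_catr/fequiv_finvl.
Qed.

Lemma fequiv_cancelr r g t : fvalid adj r -> fvalid adj g ->
  fequiv (r ++ g ++ finv g ++ t) (r ++ t).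
Proof. by move=> hr hg; have := fequiv_cancell t hr (fvalid_finv hg); rewrite finvK. Qed.

(* With D_k = C^-k (C X)^k X^-k: D_(k+1) = [C^k, X^-1] (X D_k X^-1). *)
Lemma fequiv_ncat_cat_step C X k : fvalid adj C -> fvalid adj X ->
  fequiv (fcomm (ncat k C) (finv X) ++
          X ++ (finv (ncat k C) ++ ncat k (C ++ X) ++ finv (ncat k X)) ++ finv X)
         (finv (ncat k.+1 C) ++ ncat k.+1 (C ++ X) ++ finv (ncat k.+1 X)).
Proof.
move=> vC vX; have vA := fvalid_ncat k vC; have vA' := fvalid_finv vA.
rewrite !ncatS !finv_cat /fcomm finvK -!catA.
set A := ncat k C; set R := ncat k (C ++ X) ++ _.
have h1 := fequiv_cancell (finv A ++ R) (fvalid_cat vA' (fvalid_cat vX vA)) vX.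
have h2 := fequiv_cancelr R (fvalid_cat vA' vX) vA.
have h3 := fequiv_cancell (X ++ R) vA' vC.
rewrite -!catA in h1 h2 h3.
exact: fequiv_trans h1 (fequiv_trans h2 (fequiv_sym h3)).
Qed.

Lemma fequiv_finv (s t : fword V) : fvalid adj s -> fvalid adj t -> fequiv s t ->
  fequiv (finv s) (finv t).
Proof.
move=> hs ht h; have hs' := fvalid_finv hs.
apply: (fequiv_trans (t := finv s ++ t ++ finv t)).
  by apply/fequiv_sym; have := fequiv_cancelr [::] hs' ht; rewrite !cats0.
apply: (fequiv_trans (t := finv s ++ s ++ finv t)).
  exact/fequiv_catl/fequiv_catr/fequiv_sym.
exact: fequiv_cancell (finv t) (I : fvalid adj [::]) hs.
Qed.

Lemma feval_Tr_nseq (a c : V) b k x : a != c ->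
  feval (nseq k (Tr a c, b)) x =
  if x == a then (a, false) :: nseq k (c, b) else [:: (x, false)].
Proof.
move=> hac; elim: k => [|k IH] /=; first by case: eqVneq => // ->.
rewrite IH; case: (eqVneq x a) => [_ | hx]; last by rewrite subst1 (negbTE hx).
rewrite subst_cons subst_id_on /subst_letter /= ?eqxx //.
by rewrite all_nseq /= [c == a]eq_sym (negbTE hac) eqxx orbT.
Qed.

Lemma subst_Tr_nseq_id (a c : V) b k p : a != c -> all (fun l : letter V => l.1 != a) p ->
  subst (feval (nseq k (Tr a c, b))) p = p.
Proof.
move=> hac hp; apply: subst_id_on; apply: sub_all hp => l /= hl.
by rewrite feval_Tr_nseq // (negbTE hl).
Qed.

Section Homology.
Local Open Scope ring_scope.

Lemma expsum_nil (y : V) : expsum y [::] = 0.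
Proof. exact: big_nil. Qed.

Lemma expsum_cons (y : V) (l : letter V) u :
  expsum y (l :: u) = (if l.1 == y then (if l.2 then -1 else 1) else 0) + expsum y u.
Proof. by rewrite /expsum big_cons; case: ifP; rewrite ?add0r. Qed.

Lemma expsum_cat (y : V) u w : expsum y (u ++ w) = expsum y u + expsum y w.
Proof. by rewrite /expsum big_cat. Qed.

Lemma expsum_nseq (y x : V) b k :
  expsum y (nseq k (x, b)) = k%:Z * (if x == y then (if b then -1 else 1) else 0).
Proof.
elim: k => [|k IH]; first by rewrite mul0r expsum_nil.
by rewrite expsum_cons IH -addn1 PoszD mulrDl mul1r addrC.
Qed.

Lemma expsum_winv (y : V) u : expsum y (winv u) = - expsum y u.
Proof.
elim: u => [|l u IH]; first by rewrite expsum_nil oppr0.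
rewrite winv_cons expsum_cat IH !expsum_cons expsum_nil /linv /=.
by case: ifP => _; case: (l.2) => /=; ring.
Qed.

Lemma expsum_req (y : V) u w : raag_eq adj u w -> expsum y u = expsum y w.
Proof.
elim=> {u w} [//|//|u u' u'' _ -> //|u u' w w' _ IH1 _ IH2|x b|x z b c _].
- by rewrite !expsum_cat IH1 IH2.
- rewrite !expsum_cons expsum_nil /=; case: ifP => _; last by rewrite !addr0.
  by case: b; rewrite /= addr0 ?subrr // addrC subrr.
- by rewrite !expsum_cons addrA [X in X + _]addrC -addrA.
Qed.

Lemma expsum_subst (f : gmap V) (y : V) u :
  expsum y (subst f u) = \sum_(z : V) expsum z u * expsum y (f z).
Proof.
elim: u => [|[x b] u IH].
  by rewrite expsum_nil; apply/esym/big1 => z _; rewrite expsum_nil mul0r.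
rewrite subst_cons expsum_cat IH; apply/esym.
under eq_bigr => z _ do rewrite expsum_cons mulrDl.
rewrite big_split /=; congr (_ + _).
rewrite (bigD1 x) //= eqxx big1 ?addr0 => [|z /negbTE hz]; last by rewrite eq_sym hz mul0r.
by rewrite /subst_letter /=; case: b; rewrite ?expsum_winv ?mulN1r ?mul1r.
Qed.

(* Row [x] of [hmat s] is the image of [x] under the action of [s] on
   [H_1(A_Gamma; Z) = Z^V]. *)
Definition hmat (s : fword V) (x y : V) : int := expsum y (feval s x).

Lemma hmat_cat s t x y : hmat (s ++ t) x y = \sum_(z : V) hmat t x z * hmat s z y.
Proof. by rewrite /hmat feval_cat expsum_subst. Qed.

Lemma hmat_nil x y : hmat [::] x y = (x == y)%:Z.
Proof. by rewrite /hmat /= expsum_cons expsum_nil addr0; case: eqP. Qed.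

Lemma hmat_fequiv s t x y : fequiv s t -> hmat s x y = hmat t x y.
Proof. by move=> h; apply: expsum_req. Qed.

Definition congz (m : nat) (a b : int) := (m%:Z %| a - b)%Z.

Lemma congz_refl m a : congz m a a.
Proof. by rewrite /congz subrr dvdz0. Qed.

Lemma congz_sym m a b : congz m a b -> congz m b a.
Proof. by rewrite /congz -opprB rpredN. Qed.

Lemma congz_trans m a b c : congz m a b -> congz m b c -> congz m a c.
Proof. by rewrite /congz => h1 h2; rewrite -[a](subrK b) -addrA rpredD. Qed.

Lemma congz_sum_delta m (A B : V -> V -> int) x y :
  (forall z, congz m (A x z) (x == z)%:Z) ->
  congz m (\sum_(z : V) A x z * B z y) (B x y).
Proof.
move=> hA; rewrite /congz.
have -> : B x y = \sum_(z : V) (x == z)%:Z * B z y.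
  rewrite (bigD1 x) //= eqxx mul1r big1 ?addr0 // => z /negbTE hz.
  by rewrite eq_sym hz mul0r.
by rewrite -sumrB; apply: rpred_sum => z _; rewrite -mulrBl; apply/dvdz_mulr/hA.
Qed.

End Homology.

Section CongruenceSubgroup.
Variable m : nat.
Local Open Scope ring_scope.

Lemma in_SIAP s :
  in_SIA adj m s <-> fvalid adj s /\ forall x y, congz m (hmat s x y) (x == y)%:Z.
Proof.
by rewrite /congz; split=> -[hs h]; split=> // x y;
  [rewrite -eqz_mod_dvd; apply/eqP | apply/eqP; rewrite eqz_mod_dvd]; apply: h.
Qed.

Lemma in_SIA_valid s : in_SIA adj m s -> fvalid adj s.
Proof. by case. Qed.

Lemma in_SIA_nil : in_SIA adj m [::].
Proof. by apply/in_SIAP; split=> // x y; rewrite hmat_nil; apply: congz_refl. Qed.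

Lemma in_SIA_cat s t : in_SIA adj m s -> in_SIA adj m t -> in_SIA adj m (s ++ t).
Proof.
move=> /in_SIAP [hs Es] /in_SIAP [ht Et]; apply/in_SIAP; split; first exact: fvalid_cat.
by move=> x y; rewrite hmat_cat; apply: congz_trans (Es x y); apply: congz_sum_delta.
Qed.

Lemma in_SIA_finv s : in_SIA adj m s -> in_SIA adj m (finv s).
Proof.
move=> /in_SIAP [hs Es]; apply/in_SIAP; split; first exact: fvalid_finv.
move=> x y; apply: congz_sym; have := congz_sum_delta (hmat (finv s)) y (Es x).
by rewrite -hmat_cat (hmat_fequiv _ _ (fequiv_finvl hs)) hmat_nil.
Qed.

Lemma in_SIA_fcomm a b : in_SIA adj m a -> in_SIA adj m b -> in_SIA adj m (fcomm a b).
Proof.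
move=> ha hb; have [ha' hb'] := (in_SIA_finv ha, in_SIA_finv hb).
by apply: in_SIA_cat => //; apply: in_SIA_cat => //; apply: in_SIA_cat.
Qed.

Lemma in_SIA_ncat k s : in_SIA adj m s -> in_SIA adj m (ncat k s).
Proof. by move=> hs; elim: k => [|k IH]; [apply: in_SIA_nil | apply: in_SIA_cat]. Qed.

Definition pairs_in_SIA (cs : seq (fword V * fword V)) : Prop :=
  foldr (fun c P => (in_SIA adj m c.1 /\ in_SIA adj m c.2) /\ P) True cs.

Definition fcomms (cs : seq (fword V * fword V)) : fword V :=
  flatten (map (fun c => fcomm c.1 c.2) cs).

Lemma in_SIA'P s :
  in_SIA' adj m s <-> exists2 cs, pairs_in_SIA cs & fequiv s (fcomms cs).
Proof. by split=> [[cs [h1 h2]]|[cs h1 h2]]; exists cs. Qed.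

Lemma pairs_in_SIA_cat cs ds :
  pairs_in_SIA cs -> pairs_in_SIA ds -> pairs_in_SIA (cs ++ ds).
Proof. by elim: cs => [|c cs IH] //= [hc hcs] hds; split => //; apply: IH. Qed.

Lemma fcomms_cat cs ds : fcomms (cs ++ ds) = fcomms cs ++ fcomms ds.
Proof. by rewrite /fcomms map_cat flatten_cat. Qed.

Lemma in_SIA_fcomms cs : pairs_in_SIA cs -> in_SIA adj m (fcomms cs).
Proof.
elim: cs => [_|c cs IH [[h1 h2] hcs]]; first exact: in_SIA_nil.
by apply: in_SIA_cat; [apply: in_SIA_fcomm | apply: IH].
Qed.

Lemma in_SIA'_nil : in_SIA' adj m [::].
Proof. by apply/in_SIA'P; exists [::] => //; apply: fequiv_refl. Qed.

Lemma in_SIA'_fcomm a b : in_SIA adj m a -> in_SIA adj m b -> in_SIA' adj m (fcomm a b).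
Proof.
move=> ha hb; apply/in_SIA'P; exists [:: (a, b)] => //.
by rewrite /fcomms /= cats0; apply: fequiv_refl.
Qed.

Lemma in_SIA'_fequiv s t : in_SIA' adj m s -> fequiv s t -> in_SIA' adj m t.
Proof.
case/in_SIA'P=> cs hcs hs hst; apply/in_SIA'P; exists cs => //.
exact: fequiv_trans (fequiv_sym hst) hs.
Qed.

Lemma in_SIA'_cat s t : in_SIA' adj m s -> in_SIA' adj m t -> in_SIA' adj m (s ++ t).
Proof.
case/in_SIA'P=> cs hcs hs /in_SIA'P [ds hds ht].
apply/in_SIA'P; exists (cs ++ ds); first exact: pairs_in_SIA_cat.
rewrite fcomms_cat; apply: (fequiv_trans (t := fcomms cs ++ t)); first exact: fequiv_catr.
exact/fequiv_catl/ht/in_SIA_valid/in_SIA_fcomms.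
Qed.

Lemma finv_fcomm (a b : fword V) : finv (fcomm a b) = fcomm b a.
Proof. by rewrite /fcomm !finv_cat !finvK !catA. Qed.

Lemma in_SIA'_finv s : fvalid adj s -> in_SIA' adj m s -> in_SIA' adj m (finv s).
Proof.
move=> hs /in_SIA'P [cs hcs hfs]; apply/in_SIA'P.
exists (rev (map (fun c => (c.2, c.1)) cs)).
  elim: cs {hfs} hcs => [|c cs IH] //= [[h1 h2] hcs].
  by rewrite rev_cons -cats1; apply: pairs_in_SIA_cat; [apply: IH | ].
have -> : fcomms (rev (map (fun c => (c.2, c.1)) cs)) = finv (fcomms cs).
  elim: cs {hcs hfs} => [|c cs IH] //=.
  by rewrite rev_cons -cats1 fcomms_cat IH /fcomms /= cats0 finv_cat finv_fcomm.
exact/fequiv_finv/hfs/in_SIA_valid/in_SIA_fcomms.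
Qed.

Lemma in_SIA_fequiv s t : fvalid adj t -> in_SIA adj m s -> fequiv s t -> in_SIA adj m t.
Proof.
move=> ht /in_SIAP [_ Es] hst; apply/in_SIAP; split=> // x y.
by rewrite -(hmat_fequiv _ _ hst).
Qed.

Lemma in_SIA'_in_SIA s : fvalid adj s -> in_SIA' adj m s -> in_SIA adj m s.
Proof.
move=> hs /in_SIA'P [cs hcs hfs].
exact: in_SIA_fequiv hs (in_SIA_fcomms hcs) (fequiv_sym hfs).
Qed.

(* g s g^-1 = [g^-1, s^-1] s, with the convention [fcomm a b = a^-1 b^-1 a b]. *)
Lemma in_SIA'_conj g s : in_SIA adj m g -> fvalid adj s -> in_SIA' adj m s ->
  in_SIA' adj m (g ++ s ++ finv g).
Proof.
move=> hg hs hPs; have hQs := in_SIA'_in_SIA hs hPs.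
have vg := in_SIA_valid hg.
have hgsg := fvalid_cat vg (fvalid_cat hs (fvalid_finv vg)).
apply: (in_SIA'_fequiv (s := fcomm (finv g) (finv s) ++ s)).
  by apply: in_SIA'_cat => //; apply: in_SIA'_fcomm; apply: in_SIA_finv.
by have := fequiv_cancell [::] hgsg hs; rewrite /fcomm !finvK !cats0 -!catA.
Qed.

Lemma in_SIA'_ncat_cat C X k : in_SIA adj m C -> in_SIA adj m X ->
  in_SIA' adj m (finv (ncat k C) ++ ncat k (C ++ X) ++ finv (ncat k X)).
Proof.
move=> hC hX; elim: k => [|k IH]; first exact: in_SIA'_nil.
have [vC vX] := (in_SIA_valid hC, in_SIA_valid hX).
have vD : fvalid adj (finv (ncat k C) ++ ncat k (C ++ X) ++ finv (ncat k X)).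
  apply: fvalid_cat; first exact/fvalid_finv/fvalid_ncat.
  by apply: fvalid_cat; [apply/fvalid_ncat/fvalid_cat | apply/fvalid_finv/fvalid_ncat].
apply: in_SIA'_fequiv (fequiv_ncat_cat_step k vC vX).
apply: in_SIA'_cat; last exact: in_SIA'_conj.
by apply: in_SIA'_fcomm; [apply: in_SIA_ncat | apply: in_SIA_finv].
Qed.

Lemma in_SIA'_ncat C X A B k :
  in_SIA adj m C -> in_SIA adj m X -> in_SIA adj m A -> in_SIA adj m B ->
  fequiv (ncat k (C ++ X)) (ncat k C ++ fcomm A B) -> in_SIA' adj m (ncat k X).
Proof.
move=> hC hX hA hB hCX.
have vC := in_SIA_valid (in_SIA_ncat k hC).
have vX := in_SIA_valid (in_SIA_ncat k hX).
have vK := in_SIA_valid (in_SIA_fcomm hA hB).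
have hKX : in_SIA' adj m (fcomm A B ++ finv (ncat k X)).
  apply: in_SIA'_fequiv (in_SIA'_ncat_cat k hC hX) _.
  apply: fequiv_trans (fequiv_catl (fvalid_finv vC) (fequiv_catr _ hCX)) _.
  by rewrite -catA; have /= := fequiv_cancell (r := [::]) (fcomm A B ++ finv (ncat k X)) I vC.
have hX' : in_SIA' adj m (finv (ncat k X)).
  apply: in_SIA'_fequiv (in_SIA'_cat (in_SIA'_finv vK (in_SIA'_fcomm hA hB)) hKX) _.
  by have /= := fequiv_cancell (r := [::]) (finv (ncat k X)) I vK; rewrite finv_fcomm.
by rewrite -[ncat k X]finvK; apply: in_SIA'_finv => //; apply: fvalid_finv.
Qed.

Lemma in_SIA_Tr_nseq (a c : V) b : a != c -> vle adj a c -> in_SIA adj m (nseq m (Tr a c, b)).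
Proof.
move=> hac hle; apply/in_SIAP; split; first exact: fvalid_nseq.
move=> x y; rewrite /hmat feval_Tr_nseq //.
case: ifP => [/eqP -> | _]; last first.
  by rewrite expsum_cons expsum_nil addr0 /=; case: eqP => _; apply: congz_refl.
rewrite expsum_cons expsum_nseq /= /congz addrAC.
have -> : (if a == y then 1 else 0) = (a == y)%:Z :> int by case: (a == y).
by rewrite subrr add0r dvdz_mulr.
Qed.

Lemma in_SIA_PC u (Y : {set V}) b : is_component adj u Y -> in_SIA adj m [:: (PC u Y, b)].
Proof.
move=> hY; apply/in_SIAP; split=> // x y.
suff -> : hmat [:: (PC u Y, b)] x y = (x == y)%:Z by apply: congz_refl.
rewrite /hmat feval1 /=; case: ifP => _; rewrite !expsum_cons expsum_nil /=.
  by case: (u == y); case: b; case: (x == y).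
by case: (x == y).
Qed.

End CongruenceSubgroup.

Section TransvectionCommutator.
Variables (m : nat) (v u w : V).
Hypotheses (hvu : v != u) (huw : u != w) (hvw : v != w).

Definition tcomm : fword V := fcomm (nseq m (Tr v u, false)) (nseq m (Tr u w, true)).

Lemma tcommE : tcomm = nseq m (Tr v u, true) ++ nseq m (Tr u w, false) ++
                       nseq m (Tr v u, false) ++ nseq m (Tr u w, true).
Proof. by rewrite /tcomm /fcomm !finv_nseq. Qed.

Lemma feval_tcomm_v :
  feval tcomm v = (v, false) :: nseq m (u, true) ++ ncat m ((u, false) :: nseq m (w, false)).
Proof.
have [hwv hwu] : w != v /\ w != u by rewrite !(eq_sym w).
rewrite tcommE !feval_cat feval_Tr_nseq // ifN // subst1 feval_Tr_nseq //.
rewrite eqxx [subst (feval (nseq m (Tr u w, false))) _]subst_cons subst_nseq.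
rewrite /subst_letter /= !feval_Tr_nseq // eqxx ifN //.
rewrite subst_cat subst1 feval_Tr_nseq // eqxx subst_ncat subst_Tr_nseq_id //=.
by rewrite eq_sym hvu all_nseq /= hwv orbT.
Qed.

Lemma feval_tcomm_u : feval tcomm u = (u, false) :: nseq m (w, false) ++ nseq m (w, true).
Proof.
have [huv hwu hwv] : [/\ u != v, w != u & w != v] by rewrite !(eq_sym w) eq_sym.
rewrite tcommE !feval_cat feval_Tr_nseq // eqxx.
rewrite [subst (feval (nseq m (Tr v u, false))) _]subst_Tr_nseq_id //=; last first.
  by rewrite huv all_nseq /= hwv orbT.
rewrite subst_cons [subst _ (nseq m (w, true))]subst_Tr_nseq_id ?all_nseq /= ?hwu ?orbT //.
rewrite /subst_letter /= feval_Tr_nseq // eqxx subst_Tr_nseq_id //=.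
by rewrite huv all_cat !all_nseq /= hwv !orbT.
Qed.

Lemma feval_tcomm_id x : x != v -> x != u -> feval tcomm x = [:: (x, false)].
Proof.
move=> hxv hxu; rewrite tcommE !feval_cat feval_Tr_nseq // (negbTE hxu).
by rewrite !subst_Tr_nseq_id //= ?hxv ?hxu.
Qed.

Lemma fequiv_Tr_nseq_tcomm : adj u w -> fequiv (nseq (m * m) (Tr v w, false)) tcomm.
Proof.
move=> huw_adj x; case: (eqVneq x v) => [->|hxv].
  rewrite feval_Tr_nseq // eqxx feval_tcomm_v; apply: req_cons; apply: re_sym.
  have hwu : wcomm (nseq m (w, false)) (nseq 1 (u, false)).
    by apply/wcomm_sym/wcomm_nseqr/wcomm_letters; rewrite in_st huw_adj orbT.
  have := req_ncat_cat m hwu; rewrite !ncat_nseq muln1 => hcat.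
  apply: re_trans (req_catl _ hcat) _.
  by have := req_cancell [::] (nseq m (u, false)) (nseq (m * m) (w, false)); rewrite winv_nseq.
rewrite feval_Tr_nseq // (negbTE hxv).
case: (eqVneq x u) => [->|hxu]; last by rewrite feval_tcomm_id //; apply: re_refl.
rewrite feval_tcomm_u; apply/re_sym/(req_cons (u, false)).
by have := req_invr (nseq m (w, false)); rewrite winv_nseq.
Qed.

Section NonAdjacent.
Variable Y : {set V}.
Hypotheses (hY : is_component adj u Y) (hvY : v \notin Y) (hwY : w \in Y).
Local Notation cY := [:: (PC u Y, true)].
Local Notation tvw := (nseq m (Tr v w, false)).

Lemma feval_cY x :
  feval cY x = if x \in Y then [:: (u, false); (x, false); (u, true)] else [:: (x, false)].
Proof. exact: feval1. Qed.

Lemma feval_ncat_cY_cat_id Z n x : x \notin Y -> feval Z x = [:: (x, false)] ->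
  feval (ncat n (cY ++ Z)) x = [:: (x, false)].
Proof.
move=> hx hZ; elim: n => [|n IH] //.
by rewrite ncatSr !feval_cat hZ subst1 feval_cY (negbTE hx) subst1 IH.
Qed.

Lemma feval_ncat_cY_cat_in Z n x :
  (forall z, z \in Y -> feval Z z = [:: (z, false)]) -> feval Z u = [:: (u, false)] ->
  x \in Y -> feval (ncat n (cY ++ Z)) x = nseq n (u, false) ++ (x, false) :: nseq n (u, true).
Proof.
move=> hZ hZu hx; elim: n => [|n IH] //.
have hu := feval_ncat_cY_cat_id n (component_notin_self hY) hZu.
rewrite ncatSr !feval_cat hZ // subst1 feval_cY hx !subst_cons /subst_letter /= hu IH.
by rewrite /winv /subst /linv /= -catA /= -nseqSr.
Qed.

Lemma feval_ncat_cY_id n x : x \notin Y -> feval (ncat n cY) x = [:: (x, false)].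
Proof. by move=> hx; rewrite -[cY]cats0; apply: feval_ncat_cY_cat_id. Qed.

Lemma feval_ncat_cY_in n x : x \in Y ->
  feval (ncat n cY) x = nseq n (u, false) ++ (x, false) :: nseq n (u, true).
Proof. by move=> hx; rewrite -[cY]cats0; apply: feval_ncat_cY_cat_in. Qed.

Lemma feval_tvw_id x : x != v -> feval tvw x = [:: (x, false)].
Proof. by move=> hx; rewrite feval_Tr_nseq // (negbTE hx). Qed.

Lemma feval_tvw_in z : z \in Y -> feval tvw z = [:: (z, false)].
Proof. by move=> hz; apply: feval_tvw_id; apply: contraNneq hvY => <-. Qed.

Lemma feval_ncat_cY_tvw_v n :
  req (feval (ncat n (cY ++ tvw)) v)
      ((v, false) :: ncat n ((u, false) :: nseq m (w, false)) ++ nseq n (u, true)).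
Proof.
have huv : u != v by rewrite eq_sym.
elim: n => [|n IH]; first exact: re_refl.
set F := feval (ncat n (cY ++ tvw)).
have hcX : feval (cY ++ tvw) v = (v, false) :: ncat m [:: (u, false); (w, false); (u, true)].
  rewrite feval_cat feval_Tr_nseq // eqxx subst_cons subst_nseq /subst_letter !feval_cY /=.
  by rewrite (negbTE hvY) hwY.
have hconj : subst F [:: (u, false); (w, false); (u, true)] =
    nseq n.+1 (u, false) ++ [:: (w, false)] ++ winv (nseq n.+1 (u, false)).
  have hu := feval_ncat_cY_cat_id n (component_notin_self hY) (feval_tvw_id huv).
  have hw := feval_ncat_cY_cat_in n feval_tvw_in (feval_tvw_id huv) hwY.
  rewrite /F /subst /= hu hw cats0 -[(u, false) :: nseq n _]/(nseq n.+1 _) winv_nseq nseqSr.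
  by rewrite /= -!catA.
rewrite ncatSr feval_cat hcX subst_cons subst_ncat hconj.
apply: re_trans (re_cat IH (req_ncat_conj m _ _)) _.
rewrite winv_nseq -[[:: (w, false)]]/(nseq 1 _) ncat_nseq muln1 (nseqSr n (u, false)) ncatSr.
rewrite -!catA /=; apply: req_cons.
by have := req_cancell (ncat n ((u, false) :: nseq m (w, false))) (nseq n (u, false))
  ((u, false) :: nseq m (w, false) ++ nseq n.+1 (u, true)); rewrite winv_nseq -!catA.
Qed.

Lemma feval_ncat_cY_tcomm_v :
  req (subst (feval (ncat m cY)) (feval tcomm v))
      ((v, false) :: ncat m ((u, false) :: nseq m (w, false)) ++ nseq m (u, true)).
Proof.
have huY := component_notin_self hY.
rewrite feval_tcomm_v subst_cons subst_cat subst_nseq subst_ncat subst_cons subst_nseq.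
rewrite /subst_letter /= (feval_ncat_cY_id _ hvY) (feval_ncat_cY_id _ huY).
rewrite (feval_ncat_cY_in _ hwY).
rewrite -[winv _]/(nseq 1 (u, true)) ncat_nseq muln1.
have hconj : req (ncat m (nseq m (u, false) ++ (w, false) :: nseq m (u, true)))
                 (nseq m (u, false) ++ nseq m (w, false) ++ nseq m (u, true)).
  have := req_ncat_conj m (nseq m (u, false)) (nseq 1 (w, false)).
  by rewrite winv_nseq ncat_nseq muln1.
apply: re_trans (req_catl _ (req_catl _ (req_ncat m (req_catl _ hconj)))) _.
have -> : [:: (u, false)] ++ nseq m (u, false) ++ nseq m (w, false) ++ nseq m (u, true) =
    nseq m (u, false) ++ ((u, false) :: nseq m (w, false)) ++ winv (nseq m (u, false)).
  by rewrite winv_nseq catA -[[:: (u, false)] ++ nseq m _]/(nseq m.+1 _) nseqSr -!catA.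
apply: re_trans (req_catl _ (req_catl _ (req_ncat_conj m _ _))) _.
rewrite winv_nseq /=; apply: req_cons.
have := req_cancell [::] (nseq m (u, false))
  (ncat m ((u, false) :: nseq m (w, false)) ++ nseq m (u, true)).
by rewrite winv_nseq.
Qed.

Lemma fequiv_ncat_cY_tvw : fequiv (ncat m (cY ++ tvw)) (ncat m cY ++ tcomm).
Proof.
have huv : u != v by rewrite eq_sym.
have huY := component_notin_self hY.
move=> x; rewrite feval_cat; case: (eqVneq x v) => [->|hxv].
  exact: re_trans (feval_ncat_cY_tvw_v m) (re_sym feval_ncat_cY_tcomm_v).
case: (eqVneq x u) => [->|hxu].
  rewrite (feval_ncat_cY_cat_id _ huY (feval_tvw_id huv)).
  have hG : hom (feval (ncat m cY)) by apply/hom_feval/fvalid_ncat.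
  apply: re_trans (subst_req hG (_ : req [:: (u, false)] _)).
    by rewrite subst1 feval_ncat_cY_id //; apply: re_refl.
  rewrite feval_tcomm_u; apply/re_sym/(req_cons (u, false)).
  by have := req_invr (nseq m (w, false)); rewrite winv_nseq.
rewrite feval_tcomm_id // subst1.
case: (boolP (x \in Y)) => hx.
  rewrite (feval_ncat_cY_cat_in _ feval_tvw_in (feval_tvw_id huv) hx).
  by rewrite feval_ncat_cY_in //; apply: re_refl.
rewrite (feval_ncat_cY_cat_id _ hx (feval_tvw_id hxv)).
by rewrite feval_ncat_cY_id //; apply: re_refl.
Qed.

End NonAdjacent.

End TransvectionCommutator.

End RightAngledArtinGroups.

Theorem lemma3p8 (V : finType) (adj : rel V)
  (adj_sym : symmetric adj) (adj_irr : irreflexive adj)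
  (hB2 : B2 adj) (v w : V) (hvw : v != w) (hle : vle adj v w) (m : nat) :
  in_SIA' adj m (nseq (m ^ 2) (Tr v w, false)).
Proof.
have [u [huv huw le_vu le_uw]] := hB2 v w hvw hle.
have hvu : v != u by rewrite eq_sym.
have hA := in_SIA_Tr_nseq m false hvu le_vu.
have hB := in_SIA_Tr_nseq m true huw le_uw.
rewrite -mulnn.
case: (boolP (adj u w)) => [huw_adj | huw_nadj].
  apply: in_SIA'_fequiv (in_SIA'_fcomm hA hB) _.
  exact/fequiv_sym/fequiv_Tr_nseq_tcomm.
pose Y := [set y | connect (adj_off adj u) w y].
have hY : is_component adj u Y by exists w; rewrite // in_st negb_or eq_sym huw.
rewrite -ncat_nseq.
apply: (in_SIA'_ncat adj_sym adj_irr (in_SIA_PC m true hY)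
          (in_SIA_Tr_nseq m false hvw hle) hA hB).
apply: fequiv_ncat_cY_tvw => //; first exact: vle_notin_component.
by rewrite inE connect0.
Qed.
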